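(* Let $N\ge0$, $m\ge1$, $A_0,\dots,A_N\in\mathbb{C}^{n\times n}$. Then $$\mathcal{F}(L_m)\subset\Big\{z\in\mathbb{C}:\ d(\mathcal{F}(A_0),z)\le\sum_{\ell=1}^N\|A_\ell\|\Big\}.$$
   Context: $\|\cdot\|$ is the spectral norm. For $B\in\mathbb{C}^{k\times k}$, $\mathcal{F}(B)=\{x^*Bx:x\in\mathbb{C}^k,\|x\|=1\}$ is the field of values; $d(\mathcal{S},z)$ is the distance from the point $z$ to the closed set $\mathcal{S}$. $L_m\in\mathbb{C}^{mn\times mn}$ is the lower block-triangular block-Toeplitz matrix with $n\times n$ blocks whose $(r,s)$ block equals $A_{r-s}$ if $0\le r-s\le\min(m-1,N)$ and $0$ otherwise. *)

(* The complex field C is abstracted as an arbitrary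
   numClosedFieldType (e.g. algC). *)
From HB Require Import structures.
From mathcomp Require Import all_boot all_order all_algebra all_field.
Set Implicit Arguments. Unset Strict Implicit. Unset Printing Implicit Defensive.
Import Order.TTheory GRing.Theory Num.Theory.
Local Open Scope ring_scope.

Definition vnorm (C : numClosedFieldType) (k : nat) (x : 'cV[C]_k) : C :=
  sqrtC (\sum_(i < k) `|x i 0| ^+ 2).

Definition adj_mx (C : numClosedFieldType) (k l : nat) (x : 'M[C]_(k, l)) :
  'M[C]_(l, k) := (map_mx Num.conj x)^T.

Definition fov (C : numClosedFieldType) (k : nat) (B : 'M[C]_k) (z : C) : Prop :=
  exists x : 'cV[C]_k, vnorm x = 1 /\ z = (adj_mx x *m B *m x) 0 0.

(* s is the spectral norm of B, i.e. s = sup_{x <> 0} ||Bx||/||x||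
   (written as: s is the least nonnegative t with ||Bx|| <= t ||x|| for all x) *)
Definition is_spectral_norm (C : numClosedFieldType) (k l : nat)
    (B : 'M[C]_(k, l)) (s : C) : Prop :=
  0 <= s /\ (forall x : 'cV[C]_l, vnorm (B *m x) <= s * vnorm x) /\
  (forall t : C, 0 <= t -> (forall x : 'cV[C]_l, vnorm (B *m x) <= t * vnorm x) ->
     s <= t).

(* d(S, z) <= r, with d(S,z) = inf_{w in S} |w - z| *)
Definition dist_le (C : numClosedFieldType) (S : C -> Prop) (z r : C) : Prop :=
  forall e : C, 0 < e -> exists w, S w /\ `|w - z| < r + e.

Definition Lmat (C : numClosedFieldType) (n N m : nat) (A : nat -> 'M[C]_n) :
    'M[C]_(\sum_(r < m) n) :=
  \mxblock_(r < m, s < m)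
    (if (s <= r)%N && (r - s <= minn m.-1 N)%N then A (r - s)%N else 0 : 'M[C]_n).

From HB Require Import structures.
From mathcomp Require Import all_boot all_order all_algebra all_field.
From mathcomp Require Import ring.

(* Split the quadratic form of [L_m] on a unit vector [x = (x_0, ..., x_(m-1))]
   into the diagonal part [\sum_r x_r^* A_0 x_r] and the terms
   [x_r^* A_(r-s) x_s], [r > s]. By the Toeplitz-Hausdorff theorem the pairs
   [(|w|^2, w^* A_0 w)] form a cone closed under addition, so the diagonal part
   is [w^* A_0 w] for a unit vector [w], a point of [F(A_0)]. Each remaining
   term is at most [|A_l| (|x_r|^2 + |x_s|^2) / 2] with [l = r - s], and for a
   fixed [l] these weights add up to at most [\sum_r |x_r|^2 = 1]. *)

Set Implicit Arguments. Unset Strict Implicit. Unset Printing Implicit Defensive.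
Import Order.TTheory GRing.Theory Num.Theory.
Local Open Scope ring_scope.

Section SesquilinearForm.
Variable C : numClosedFieldType.
Implicit Types (k : nat) (a : C).

Definition sform k (M : 'M[C]_k) (u v : 'cV[C]_k) : C := (adj_mx u *m M *m v) 0 0.
Definition sqnorm k (u : 'cV[C]_k) : C := sform 1%:M u u.

Lemma adj_mxD k (u v : 'cV[C]_k) : adj_mx (u + v) = adj_mx u + adj_mx v.
Proof. by apply/matrixP => i j; rewrite !mxE rmorphD. Qed.

Lemma adj_mxZ k a (u : 'cV[C]_k) : adj_mx (a *: u) = a^* *: adj_mx u.
Proof. by apply/matrixP => i j; rewrite !mxE rmorphM. Qed.

Lemma sformDl k (M : 'M[C]_k) u1 u2 v : sform M (u1 + u2) v = sform M u1 v + sform M u2 v.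
Proof. by rewrite /sform adj_mxD !mulmxDl mxE. Qed.

Lemma sformDr k (M : 'M[C]_k) u v1 v2 : sform M u (v1 + v2) = sform M u v1 + sform M u v2.
Proof. by rewrite /sform !mulmxDr mxE. Qed.

Lemma sformZl k (M : 'M[C]_k) a u v : sform M (a *: u) v = a^* * sform M u v.
Proof. by rewrite /sform adj_mxZ -!scalemxAl mxE. Qed.

Lemma sformZr k (M : 'M[C]_k) a u v : sform M u (a *: v) = a * sform M u v.
Proof. by rewrite /sform -!scalemxAr mxE. Qed.

Lemma sform_addM k (M1 M2 : 'M[C]_k) u v :
  sform (M1 + M2) u v = sform M1 u v + sform M2 u v.
Proof. by rewrite /sform mulmxDr mulmxDl mxE. Qed.

Lemma sform_scaleM k (M : 'M[C]_k) a u v : sform (a *: M) u v = a * sform M u v.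
Proof. by rewrite /sform -scalemxAr -scalemxAl mxE. Qed.

Lemma sform_oppM k (M : 'M[C]_k) u v : sform (- M) u v = - sform M u v.
Proof. by rewrite -scaleN1r sform_scaleM mulN1r. Qed.

Lemma sform0l k (M : 'M[C]_k) v : sform M 0 v = 0.
Proof. by rewrite -[0](scale0r 0) sformZl rmorph0 mul0r. Qed.

Lemma sform0r k (M : 'M[C]_k) u : sform M u 0 = 0.
Proof. by rewrite /sform mulmx0 mxE. Qed.

Lemma sform0M k (u v : 'cV[C]_k) : sform 0 u v = 0.
Proof. by rewrite /sform mulmx0 mul0mx mxE. Qed.

Lemma sform_real_scale k (M : 'M[C]_k) a u : a \is Num.real ->
  sform M (a *: u) (a *: u) = a ^+ 2 * sform M u u.
Proof. by move=> ar; rewrite sformZl sformZr conj_Creal // mulrA -expr2. Qed.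

Lemma sform1E k (u v : 'cV[C]_k) : sform 1%:M u v = \sum_i (u i 0)^* * v i 0.
Proof. by rewrite /sform mulmx1 mxE; apply: eq_bigr => i _; rewrite !mxE. Qed.

Lemma sform1_conj k (u v : 'cV[C]_k) : (sform 1%:M u v)^* = sform 1%:M v u.
Proof.
rewrite !sform1E rmorph_sum; apply: eq_bigr => i _.
by rewrite rmorphM /= conjCK mulrC.
Qed.

Lemma sqnormE k (u : 'cV[C]_k) : sqnorm u = \sum_i `|u i 0| ^+ 2.
Proof. by rewrite /sqnorm sform1E; apply: eq_bigr => i _; rewrite normCKC. Qed.

Lemma vnormE k (u : 'cV[C]_k) : vnorm u = sqrtC (sqnorm u).
Proof. by rewrite /vnorm sqnormE. Qed.

Lemma sqnorm_ge0 k (u : 'cV[C]_k) : 0 <= sqnorm u.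
Proof. by rewrite sqnormE; apply: sumr_ge0 => i _; rewrite exprn_ge0. Qed.

Lemma sqnorm_eq0 k (u : 'cV[C]_k) : sqnorm u = 0 -> u = 0.
Proof.
rewrite sqnormE => /eqP; rewrite psumr_eq0 => [/allP u0|i _]; last exact: exprn_ge0.
apply/matrixP => i j; rewrite (ord1 j) mxE.
by apply/eqP; rewrite -normr_eq0 -sqrf_eq0 (implyP (u0 i (mem_index_enum i))).
Qed.

Lemma sform_scale_sqnorm k (M : 'M[C]_k) (x : 'cV[C]_k) (r : C) : 0 <= r ->
  sqnorm (sqrtC r *: x) = r * sqnorm x /\
  sform M (sqrtC r *: x) (sqrtC r *: x) = r * sform M x x.
Proof. by move=> r0; rewrite /sqnorm !sform_real_scale ?sqrtC_real // sqrtCK. Qed.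

End SesquilinearForm.

Section NumericalRangeCone.
Variable C : numClosedFieldType.
Implicit Types (k : nat).

Lemma unit_rotation_real (e : C) : exists z, z^* * z = 1 /\ (z * e)^* = z * e.
Proof.
have [->|e0] := eqVneq e 0; first by exists 1; rewrite rmorph1 mulr1 mulr0 rmorph0.
exists (e^* / `|e|); split.
  rewrite rmorphM /= conjCK fmorphV /= conj_normC mulrACA -invfM -normCK.
  by rewrite mulfV // expf_neq0 // normr_eq0.
by rewrite mulrAC -normCKC expr2 mulfK ?normr_eq0 // conj_normC.
Qed.

Lemma real_quadratic_root (b c : C) : b \is Num.real -> c \is Num.real -> c != 0 ->
  exists2 t, t \is Num.real & c * t ^+ 2 + b * t - c = 0.
Proof.
move=> br cr c0; pose D := b ^+ 2 + 4 * c ^+ 2.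
have D0 : 0 <= D by rewrite addr_ge0 ?(mulr_ge0 (ler0n _ 4)) // -realEsqr.
exists ((- b + sqrtC D) / (2 * c)).
  by rewrite rpredM ?rpredV ?rpredD ?rpredN ?rpredM ?rpred_nat ?sqrtC_real.
transitivity ((sqrtC D ^+ 2 - D) / (4 * c)); last by rewrite sqrtCK subrr mul0r.
by rewrite /D; field; rewrite c0.
Qed.

Lemma sform_rotate_cross_real k (M : 'M[C]_k) (x y : 'cV[C]_k) :
  exists u, [/\ sqnorm u = sqnorm y, sform M u u = sform M y y &
    (sform M x u + sform M u x)^* = sform M x u + sform M u x].
Proof.
have [z [zz ze]] := unit_rotation_real (sform M x y - (sform M y x)^*).
exists (z *: y); rewrite /sqnorm !sformZl !sformZr !mulrA zz !mul1r; split => //.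
move: ze; rewrite !rmorphM rmorphB rmorphD !rmorphM /= !conjCK => ze.
set c := sform M x y in ze *; set d := sform M y x in ze *.
transitivity (z^* * (c^* - d) + z * d^* + z^* * d); first by ring.
by rewrite ze; ring.
Qed.

(* With the cross term real, [sform M] and [sqnorm] are real quadratics along
   [al *: x + u], [al] real; [al] is a root making their ratio
   [sqnorm y / (sqnorm x + sqnorm y)], and the result is then rescaled. *)
Lemma toeplitz_hausdorff_step k (M : 'M[C]_k) (x y : 'cV[C]_k) :
  0 < sqnorm x -> 0 < sqnorm y -> sform M x x = 0 -> sform M y y = sqnorm y ->
  exists w, sqnorm w = sqnorm x + sqnorm y /\ sform M w w = sqnorm y.
Proof.
move=> px qy Mx My; have [u [nu Mu t_conj]] := sform_rotate_cross_real M x y.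
rewrite My in Mu.
set p := sqnorm x in px *; set q := sqnorm y in qy My nu Mu *.
set t := sform M x u + sform M u x in t_conj.
pose g := sform 1%:M x u + sform 1%:M u x.
have g_real : g \is Num.real by rewrite CrealE /g rmorphD /= !sform1_conj addrC.
have t_real : t \is Num.real by rewrite CrealE t_conj.
have p_real := gtr0_real px; have q_real := gtr0_real qy.
have [al alr root] : exists2 al, al \is Num.real &
    q * p * al ^+ 2 + (q * g - t * (p + q)) * al - q * p = 0.
  apply: real_quadratic_root; first exact: rpredB (rpredM _ _) (rpredM _ (rpredD _ _)).
  - exact: rpredM.
  - by rewrite mulf_neq0 ?gt_eqF.
pose w := al *: x + u.
have nw : sqnorm w = al ^+ 2 * p + al * g + q.
  rewrite /sqnorm /w !sformDl !sformDr !sformZl !sformZr conj_Creal // -/(sqnorm x).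
  by rewrite -/(sqnorm u) nu -/p /g; ring.
have Mw : sform M w w = al * t + q.
  rewrite /w !sformDl !sformDr !sformZl !sformZr conj_Creal // Mx Mu /t; ring.
have w0 : sqnorm w != 0.
  apply/eqP => /sqnorm_eq0 /eqP; rewrite /w addrC addr_eq0 => /eqP uE.
  by move: Mu; rewrite uE -scaleNr sform_real_scale ?rpredN // Mx mulr0 => /esym/eqP; rewrite gt_eqF.
have Mw_ratio : (p + q) * sform M w w = q * sqnorm w.
  rewrite Mw nw; apply/eqP; rewrite -subr_eq0; apply/eqP.
  by rewrite -[RHS]oppr0 -root; ring.
have r0 : 0 <= (p + q) / sqnorm w by rewrite divr_ge0 ?sqnorm_ge0 // addr_ge0 // ltW.
have [nw' Mw'] := sform_scale_sqnorm M w r0.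
exists (sqrtC ((p + q) / sqnorm w) *: w); rewrite nw' Mw'.
by split; [exact: divfK | rewrite mulrAC Mw_ratio mulfK].
Qed.

(* The set of pairs [(sqnorm w, sform B w w)] is closed under addition:
   the Toeplitz-Hausdorff convexity of the field of values. *)
Lemma numrange_cone_add k (B : 'M[C]_k) (x y : 'cV[C]_k) :
  exists w, sqnorm w = sqnorm x + sqnorm y /\
            sform B w w = sform B x x + sform B y y.
Proof.
have [/sqnorm_eq0 ->|px] := eqVneq (sqnorm x) 0.
  by exists y; rewrite /sqnorm !sform0l !add0r.
have [/sqnorm_eq0 ->|qy] := eqVneq (sqnorm y) 0.
  by exists x; rewrite /sqnorm !sform0l !addr0.
have p_gt0 : 0 < sqnorm x by rewrite lt_def px sqnorm_ge0.
have q_gt0 : 0 < sqnorm y by rewrite lt_def qy sqnorm_ge0.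
set p := sqnorm x in px p_gt0 *; set q := sqnorm y in qy q_gt0 *.
set a := sform B x x; set b := sform B y y.
pose c1 := a / p; pose c2 := b / q.
have [c12|c12] := eqVneq c1 c2.
  have r0 : 0 <= (p + q) / p by rewrite divr_ge0 ?addr_ge0 ?ltW.
  have [nw Bw] := sform_scale_sqnorm B x r0.
  exists (sqrtC ((p + q) / p) *: x); rewrite nw Bw -/p -/a divfK //; split => //.
  by rewrite -[b](divfK qy) -/c2 -c12 /c1; field; rewrite px.
have dc : c2 - c1 != 0 by rewrite subr_eq0 eq_sym.
pose M := (c2 - c1)^-1 *: (B - c1 *: 1%:M).
have sformM v : sform M v v = (c2 - c1)^-1 * (sform B v v - c1 * sqnorm v).
  by rewrite /M sform_scaleM sform_addM sform_oppM sform_scaleM.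
have [w [nw Mw]] : exists w, sqnorm w = p + q /\ sform M w w = q.
  apply: toeplitz_hausdorff_step => //.
    by rewrite sformM -/a -/p /c1 divfK // subrr mulr0.
  by rewrite sformM -/b -/q -[b](divfK qy) -/c2 -mulrBl mulKf.
exists w; split => //; move: Mw; rewrite sformM nw => Mw.
have -> : sform B w w = (c2 - c1) * q + c1 * (p + q) by rewrite -{1}Mw mulVKf ?subrK.
by rewrite /c1 /c2; field; rewrite px qy.
Qed.

Lemma numrange_cone_sum k (B : 'M[C]_k) m (xs : 'I_m -> 'cV[C]_k) :
  exists w, sqnorm w = \sum_r sqnorm (xs r) /\
            sform B w w = \sum_r sform B (xs r) (xs r).
Proof.
elim: m xs => [|m IH] xs; first by exists 0; rewrite !big_ord0 /sqnorm !sform0l.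
have [w [nw Bw]] := IH (fun r => xs (widen_ord (leqnSn m) r)).
have [w' [nw' Bw']] := numrange_cone_add B w (xs ord_max).
by exists w'; rewrite !big_ord_recr /= -nw -Bw.
Qed.

End NumericalRangeCone.

Section FormBounds.
Variable C : numClosedFieldType.
Implicit Types (k : nat).

Lemma real_mul_le_amgm (lam a b : C) : 0 < lam -> a \is Num.real -> b \is Num.real ->
  a * b <= (lam * a ^+ 2 + lam^-1 * b ^+ 2) / 2.
Proof.
move=> l0 ar br; rewrite -subr_ge0.
have -> : (lam * a ^+ 2 + lam^-1 * b ^+ 2) / 2 - a * b = (lam * a - b) ^+ 2 / (2 * lam).
  by field; rewrite gt_eqF.
rewrite divr_ge0 ?(mulr_ge0 (ler0n _ 2) (ltW l0)) // -realEsqr.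
by apply: rpredB => //; apply: rpredM => //; exact: gtr0_real.
Qed.

Lemma norm_sform1_le k (u w : 'cV[C]_k) lam : 0 < lam ->
  `|sform 1%:M u w| <= (lam * sqnorm u + lam^-1 * sqnorm w) / 2.
Proof.
move=> l0; rewrite sform1E !sqnormE; apply: le_trans (ler_norm_sum _ _ _) _.
rewrite !mulr_sumr -big_split mulr_suml; apply: ler_sum => i _.
by rewrite normrM norm_conjC real_mul_le_amgm ?normr_real.
Qed.

Lemma norm_sform_le k (M : 'M[C]_k) c (u v : 'cV[C]_k) : 0 <= c ->
  (forall x, vnorm (M *m x) <= c * vnorm x) ->
  `|sform M u v| <= c * (sqnorm u + sqnorm v) / 2.
Proof.
move=> c0 hM.
have -> : sform M u v = sform 1%:M u (M *m v) by rewrite /sform mulmx1 mulmxA.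
have hMv : sqnorm (M *m v) <= c ^+ 2 * sqnorm v.
  have := hM v; rewrite !vnormE => h.
  rewrite -[sqnorm (M *m v)]sqrtCK -[sqnorm v]sqrtCK -exprMn.
  by rewrite lerXn2r ?nnegrE ?mulr_ge0 ?sqrtC_ge0 ?sqnorm_ge0.
have [c_eq0|c_neq0] := eqVneq c 0.
  move: hMv; rewrite c_eq0 expr0n mul0r => hMv.
  have /sqnorm_eq0 -> : sqnorm (M *m v) = 0 by apply/eqP; rewrite eq_le hMv sqnorm_ge0.
  by rewrite sform0r normr0 !mul0r.
have c_gt0 : 0 < c by rewrite lt_def c_neq0.
apply: le_trans (norm_sform1_le _ _ c_gt0) _.
rewrite ler_pM2r ?invr_gt0 ?ltr0n // mulrDr lerD2l.
by rewrite ler_pdivrMl // mulrA -expr2.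
Qed.

End FormBounds.

Section BlockToeplitz.
Variables (C : numClosedFieldType) (n N : nat) (A : nat -> 'M[C]_n).

Lemma adj_mxcol m (B : 'I_m -> 'cV[C]_n) :
  adj_mx (\mxcol_i B i) = \mxrow_i adj_mx (B i).
Proof. by apply/matrixP => i j; rewrite !mxE. Qed.

Lemma sform_mxblock m (B : 'I_m -> 'I_m -> 'M[C]_n) (x : 'cV[C]_(\sum_(r < m) n)) :
  sform (\mxblock_(r < m, s < m) B r s) x x =
  \sum_s \sum_r sform (B r s) (submxcol x r) (submxcol x s).
Proof.
rewrite /sform -[x in adj_mx x]submxcolK -[x in _ *m x]submxcolK adj_mxcol.
rewrite mul_mxrow_mxblock mul_mxrow_mxcol summxE; apply: eq_bigr => s _.
by rewrite mulmx_suml summxE.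
Qed.

Lemma sqnorm_mxcol m (x : 'cV[C]_(\sum_(r < m) n)) :
  sqnorm x = \sum_r sqnorm (submxcol x r).
Proof.
rewrite /sqnorm /sform mulmx1 -[x in adj_mx x]submxcolK -[x in _ *m x]submxcolK.
rewrite adj_mxcol mul_mxrow_mxcol summxE.
by apply: eq_bigr => r _; rewrite mulmx1.
Qed.

Definition Lblock m (r s : 'I_m) : 'M[C]_n :=
  if (s <= r)%N && (r - s <= minn m.-1 N)%N then A (r - s) else 0.

Lemma sform_Lmat_split m (x : 'cV[C]_(\sum_(r < m) n)) :
  sform (Lmat N m A) x x =
  \sum_r sform (A 0) (submxcol x r) (submxcol x r) +
  \sum_s \sum_(r | r != s) sform (Lblock r s) (submxcol x r) (submxcol x s).
Proof.
rewrite [Lmat _ _ _]/Lmat -/(Lblock _ _) sform_mxblock -big_split.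
by apply: eq_bigr => s _; rewrite (bigD1 s) //= /Lblock leqnn subnn leq0n.
Qed.

Definition shift_weight m (a : 'I_m -> C) (s r : 'I_m) (l : nat) : C :=
  if val r == (s + l)%N then (a r + a s) / 2 else 0.

Lemma sum_unique_le m (P : pred 'I_m) (c : C) : 0 <= c ->
  (forall i j, P i -> P j -> i = j) -> \sum_i (if P i then c else 0) <= c.
Proof.
move=> c0 uP; case: (pickP P) => [i Pi|nP]; last by rewrite big1 // => i _; rewrite nP.
rewrite (bigD1 i) //= Pi big1 ?addr0 // => j ji; case: ifP => // Pj.
by move: ji; rewrite (uP _ _ Pj Pi) eqxx.
Qed.

Lemma shift_weight_sum_le m (a : 'I_m -> C) l :
  (forall r, 0 <= a r) -> \sum_r a r = 1 -> \sum_s \sum_r shift_weight a s r l <= 1.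
Proof.
move=> a0 a1; pose I (s r : 'I_m) := val r == (s + l)%N.
have -> : \sum_s \sum_r shift_weight a s r l =
    (\sum_s \sum_r (if I s r then a r else 0) +
     \sum_s \sum_r (if I s r then a s else 0)) / 2.
  rewrite -big_split mulr_suml; apply: eq_bigr => s _.
  rewrite -big_split mulr_suml; apply: eq_bigr => r _.
  by rewrite /shift_weight /I; case: ifP => _ //=; rewrite addr0 mul0r.
have I_uniq_s r s1 s2 : I s1 r -> I s2 r -> s1 = s2.
  by move=> /eqP h1 /eqP h2; apply/val_inj/eqP; rewrite -(eqn_add2r l) -h1 -h2.
have I_uniq_r s r1 r2 : I s r1 -> I s r2 -> r1 = r2.
  by move=> /eqP h1 /eqP h2; apply/val_inj; rewrite /= h1 h2.
have le_r : \sum_s \sum_r (if I s r then a r else 0) <= 1.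
  by rewrite exchange_big -a1 ler_sum // => r _; apply: sum_unique_le => // s1 s2; apply: I_uniq_s.
have le_s : \sum_s \sum_r (if I s r then a s else 0) <= 1.
  by rewrite -a1 ler_sum // => s _; apply: sum_unique_le => // r1 r2; apply: I_uniq_r.
apply: le_trans (ler_wpM2r _ (lerD le_r le_s)) _; first by rewrite invr_ge0 ler0n.
by rewrite (_ : (1 + 1) / 2 = 1 :> C) //; field.
Qed.

Section SpectralNorms.
Variable nrm : nat -> C.
Hypothesis A_norm : forall l, (1 <= l <= N)%N -> is_spectral_norm (A l) (nrm l).

Lemma shift_bound_ge0 m (a : 'I_m -> C) (s r : 'I_m) : (forall i, 0 <= a i) ->
  0 <= \sum_(1 <= l < N.+1) nrm l * shift_weight a s r l.
Proof.
move=> a0; rewrite big_nat_cond sumr_ge0 // => l /andP[/A_norm[nrm_ge0 _] _].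
rewrite mulr_ge0 // /shift_weight; case: ifP => // _.
by rewrite divr_ge0 ?addr_ge0 ?ler0n.
Qed.

Lemma norm_sform_Lblock_le m (x : 'cV[C]_(\sum_(r < m) n)) (s r : 'I_m) :
  r != s ->
  `|sform (Lblock r s) (submxcol x r) (submxcol x s)| <=
  \sum_(1 <= l < N.+1) nrm l * shift_weight (fun i => sqnorm (submxcol x i)) s r l.
Proof.
move=> rs; set a := fun i => _.
rewrite /Lblock; case: ifP => [/andP[sr rsN]|_]; last first.
  by rewrite sform0M normr0 shift_bound_ge0 // => i; apply: sqnorm_ge0.
have l_gt0 : (0 < r - s)%N.
  by rewrite subn_gt0 ltn_neqAle sr andbT; apply: contra rs => /eqP/val_inj ->.
have lN : (r - s <= N)%N := leq_trans rsN (geq_minr _ _).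
rewrite (bigD1_seq (r - s)%N) ?mem_index_iota ?l_gt0 ?ltnS ?iota_uniq //=.
rewrite big1_seq ?addr0 => [|l /andP[ll _]]; last first.
  by rewrite /shift_weight ifF ?mulr0 //; apply: contraNF ll => /eqP ->; rewrite addKn.
have [nrm_ge0 [A_le _]] := A_norm (introT andP (conj l_gt0 lN)).
by rewrite /shift_weight subnKC // eqxx mulrA norm_sform_le.
Qed.

Lemma norm_Lmat_offdiag_le m (x : 'cV[C]_(\sum_(r < m) n)) : sqnorm x = 1 ->
  `|\sum_s \sum_(r | r != s) sform (Lblock r s) (submxcol x r) (submxcol x s)|
    <= \sum_(1 <= l < N.+1) nrm l.
Proof.
move=> x1; set a := fun i => sqnorm (submxcol x i).
have a0 i : 0 <= a i by apply: sqnorm_ge0.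
have a1 : \sum_r a r = 1 by rewrite -sqnorm_mxcol.
pose T s r := \sum_(1 <= l < N.+1) nrm l * shift_weight a s r l.
apply: le_trans (ler_norm_sum _ _ _) _.
apply: le_trans (_ : _ <= \sum_s \sum_r T s r) _.
  apply: ler_sum => s _; apply: le_trans (ler_norm_sum _ _ _) _.
  rewrite [leRHS](bigD1 s) //= ler_wpDl ?shift_bound_ge0 //.
  by apply: ler_sum => r; apply: norm_sform_Lblock_le.
under eq_bigr do rewrite exchange_big; rewrite exchange_big.
rewrite big_nat_cond [leRHS]big_nat_cond; apply: ler_sum => l /andP[/A_norm[nrm_ge0 _] _].
under eq_bigr do rewrite -mulr_sumr; rewrite -mulr_sumr.
by rewrite ler_piMr // shift_weight_sum_le.
Qed.

End SpectralNorms.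
End BlockToeplitz.

Theorem mainTheorem8 (C : numClosedFieldType) (n N m : nat)
    (A : nat -> 'M[C]_n) (nrm : nat -> C) :
  (1 <= m)%N ->
  (forall l : nat, (1 <= l <= N)%N -> is_spectral_norm (A l) (nrm l)) ->
  forall z : C, fov (Lmat N m A) z ->
    dist_le (fov (A 0%N)) z (\sum_(1 <= l < N.+1) nrm l).
Proof.
(* For [m = 0] there is no unit vector. *)
move=> _ A_norm z [x [x1 ->]] e e_gt0.
have sqnorm_x : sqnorm x = 1 by rewrite -[sqnorm x]sqrtCK -vnormE x1 expr1n.
have [w [w1 Aw]] := numrange_cone_sum (A 0%N) (submxcol x).
exists (sform (A 0%N) w w); split.
  by exists w; rewrite vnormE w1 -sqnorm_mxcol sqnorm_x sqrtC1.
rewrite -/(sform _ x x) sform_Lmat_split -Aw opprD addrA subrr add0r normrN.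
by apply: le_lt_trans (norm_Lmat_offdiag_le A_norm sqnorm_x) _; rewrite ltrDl.
Qed.
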